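(* Let $\mathcal{T}$ be a $\operatorname{Hom}$-finite Krull–Schmidt triangulated category over an algebraically closed field, and let $(\mathcal{I},\mathcal{R})$ be an ideal torsion pair in $\mathcal{T}$. Then (1) $\mathcal{I}=\mathrm{CoGh}_{\mathcal{R}}$ and $\mathcal{R}=\mathrm{Gh}_{\mathcal{I}}$; (2) $\mathcal{I}$ is contravariantly finite and $\mathcal{R}$ is covariantly finite.
   Context: Composition of $f:X\to Y$, $g:Y\to Z$ is $gf$. An ideal: subgroups $\mathcal{I}(X,Y)\subseteq\operatorname{Hom}(X,Y)$ closed under composition with arbitrary morphisms. $\mathrm{Gh}_{\mathcal{I}}=\{f: fi=0\text{ for all composable } i\in\mathcal{I}\}$, $\mathrm{CoGh}_{\mathcal{I}}=\{f: if=0\text{ for all composable } i\in\mathcal{I}\}$. A pair $(\mathcal{I},\mathcal{R})$ of ideals is an ideal torsion pair if (a) for all $i:S\to T$ in $\mathcal{I}$ and $r:U\to V$ in $\mathcal{R}$, $rgi=0$ for every $g:T\to U$; and (b) for each $T\in\mathcal{T}$ there is a triangle $X\xrightarrow{f}T\xrightarrow{g}Y\to X[1]$ with $f\in\mathcal{I}$ and $g\in\mathcal{R}$. $\mathcal{I}$ is contravariantly (resp. covariantly) finite if every object has a right (resp. left) $\mathcal{I}$-approximation, where a right $\mathcal{I}$-approximation of $T$ is $i:X\to T$ in $\mathcal{I}$ through which every morphism of $\mathcal{I}$ ending at $T$ factors, and left approximations are dual. *)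

(* Hom-finite k-linear categories: Hom spaces are
   finite-dimensional k-vector spaces (vectType k). *)
From HB Require Import structures.
From mathcomp Require Import all_boot all_order all_algebra.
Set Implicit Arguments. Unset Strict Implicit. Unset Printing Implicit Defensive.
Import GRing.Theory.
Local Open Scope ring_scope.

Record hfcat (k : fieldType) := HFCat {
  Obj : Type;
  Mor : Obj -> Obj -> vectType k;
  idm : forall X, Mor X X;
  comp : forall X Y Z, Mor Y Z -> Mor X Y -> Mor X Z;
  compA : forall X Y Z W (f : Mor X Y) (g : Mor Y Z) (h : Mor Z W),
      comp h (comp g f) = comp (comp h g) f;
  comp_idl : forall X Y (f : Mor X Y), comp (idm Y) f = f;
  comp_idr : forall X Y (f : Mor X Y), comp f (idm X) = f;
  comp_linl : forall X Y Z (f : Mor X Y) (a : k) (g g' : Mor Y Z),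
      comp (a *: g + g') f = a *: comp g f + comp g' f;
  comp_linr : forall X Y Z (g : Mor Y Z) (a : k) (f f' : Mor X Y),
      comp g (a *: f + f') = a *: comp g f + comp g f'
}.
Arguments Obj {k} _.
Arguments Mor {k} _ _ _.
Arguments idm {k _} X.
Arguments comp {k _ X Y Z} _ _.

Section CatDefs.
Variables (k : fieldType) (C : hfcat k).

Definition is_iso (X Y : Obj C) (f : Mor C X Y) : Prop :=
  exists g : Mor C Y X, comp g f = idm X /\ comp f g = idm Y.

Definition is_zero_obj (Z : Obj C) : Prop := idm Z = 0.

Definition is_biproduct (X Y S : Obj C) (i1 : Mor C X S) (i2 : Mor C Y S)
    (p1 : Mor C S X) (p2 : Mor C S Y) : Prop :=
  [/\ comp p1 i1 = idm X, comp p2 i2 = idm Y, comp p1 i2 = 0, comp p2 i1 = 0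
    & comp i1 p1 + comp i2 p2 = idm S].

Definition additive : Prop :=
  (exists Z, is_zero_obj Z) /\
  forall X Y, exists S i1 i2 p1 p2, @is_biproduct X Y S i1 i2 p1 p2.

Definition local_end (Y : Obj C) : Prop :=
  idm Y <> 0 /\ forall e : Mor C Y Y, is_iso e \/ is_iso (idm Y - e).

Definition krull_schmidt : Prop :=
  forall X : Obj C, exists (n : nat) (Xs : 'I_n -> Obj C)
    (e : forall i, Mor C (Xs i) X) (p : forall i, Mor C X (Xs i)),
    [/\ forall i, local_end (Xs i),
        forall i, comp (p i) (e i) = idm (Xs i),
        forall i j, i != j -> comp (p i) (e j) = 0
      & \sum_(i < n) comp (e i) (p i) = idm X].

End CatDefs.

Record tridata (k : fieldType) := TriData {
  tcat : hfcat k;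
  shO : Obj tcat -> Obj tcat;
  shM : forall X Y, Mor tcat X Y -> Mor tcat (shO X) (shO Y);
  dist : forall X Y Z, Mor tcat X Y -> Mor tcat Y Z -> Mor tcat Z (shO X) -> Prop
}.
Arguments tcat {k} _.
Arguments shO {k} _ _.
Arguments shM {k _ X Y} _.
Arguments dist {k _ X Y Z} _ _ _.

Section Triangulated.
Variables (k : fieldType) (T : tridata k).
Local Notation C := (tcat T).
Local Notation O := (Obj C).
Local Notation H := (Mor C).

Definition shift_autoequiv : Prop :=
  [/\ forall X Y (a : k) (f g : H X Y), shM (a *: f + g) = a *: shM f + shM g,
      forall X, shM (idm X) = idm (shO T X),
      forall X Y Z (f : H X Y) (g : H Y Z), shM (comp g f) = comp (shM g) (shM f),
      forall X Y, bijective (@shM k T X Y)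
    & forall Y : O, exists X (f : H (shO T X) Y), is_iso f].

Definition TR1 : Prop :=
  [/\
      forall X Y Z X' Y' Z' (u : H X Y) (v : H Y Z) (w : H Z (shO T X))
        (u' : H X' Y') (v' : H Y' Z') (w' : H Z' (shO T X'))
        (a : H X X') (b : H Y Y') (c : H Z Z'),
        dist u v w -> is_iso a -> is_iso b -> is_iso c ->
        comp u' a = comp b u -> comp v' b = comp c v ->
        comp w' c = comp (shM a) w -> dist u' v' w',
      forall X Z (v : H X Z) (w : H Z (shO T X)),
        is_zero_obj Z -> dist (idm X) v w
    &
      forall X Y (u : H X Y), exists Z (v : H Y Z) (w : H Z (shO T X)),
        dist u v w].

Definition TR2 : Prop :=
  forall X Y Z (u : H X Y) (v : H Y Z) (w : H Z (shO T X)),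
    dist u v w <-> dist v w (- shM u).

Definition TR3 : Prop :=
  forall X Y Z X' Y' Z' (u : H X Y) (v : H Y Z) (w : H Z (shO T X))
    (u' : H X' Y') (v' : H Y' Z') (w' : H Z' (shO T X'))
    (a : H X X') (b : H Y Y'),
    dist u v w -> dist u' v' w' -> comp u' a = comp b u ->
    exists c : H Z Z', comp v' b = comp c v /\ comp w' c = comp (shM a) w.

Definition TR4 : Prop :=
  forall X Y Z Z' X' Y' (u : H X Y) (v : H Y Z)
    (j : H Y Z') (kk : H Z' (shO T X))
    (l : H Z X') (i : H X' (shO T Y))
    (m : H Z Y') (n : H Y' (shO T X)),
    dist u j kk -> dist v l i -> dist (comp v u) m n ->
    exists (f : H Z' Y') (g : H Y' X'),
      [/\ dist f g (comp (shM j) i),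
          comp f j = comp m v, comp n f = kk,
          comp g m = l & comp (shM u) n = comp i g].

Definition triangulated : Prop :=
  [/\ additive C, shift_autoequiv, TR1, TR2 & (TR3 /\ TR4)].

Definition ideal (I : forall X Y : O, H X Y -> Prop) : Prop :=
  [/\ forall X Y, I X Y 0,
      forall X Y (f g : H X Y), I X Y f -> I X Y g -> I X Y (f - g)
    & forall W X Y Z (a : H W X) (f : H X Y) (b : H Y Z),
        I X Y f -> I W Z (comp b (comp f a))].

Definition Gh (I : forall X Y : O, H X Y -> Prop) X Y (f : H X Y) : Prop :=
  forall W (i : H W X), I W X i -> comp f i = 0.

Definition CoGh (I : forall X Y : O, H X Y -> Prop) X Y (f : H X Y) : Prop :=
  forall Z (i : H Y Z), I Y Z i -> comp i f = 0.

Definition ideal_torsion_pair (I R : forall X Y : O, H X Y -> Prop) : Prop :=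
  [/\ ideal I, ideal R,
      forall S T' U V (i : H S T') (r : H U V) (g : H T' U),
        I S T' i -> R U V r -> comp r (comp g i) = 0
    & forall T' : O, exists X Y (f : H X T') (g : H T' Y) (h : H Y (shO T X)),
        [/\ I X T' f, R T' Y g & dist f g h]].

Definition contravariantly_finite (I : forall X Y : O, H X Y -> Prop) : Prop :=
  forall T' : O, exists X (i : H X T'), I X T' i /\
    forall S (j : H S T'), I S T' j -> exists h : H S X, j = comp i h.

Definition covariantly_finite (R : forall X Y : O, H X Y -> Prop) : Prop :=
  forall T' : O, exists Y (r : H T' Y), R T' Y r /\
    forall U (j : H T' U), R T' U j -> exists h : H Y U, j = comp h r.

End Triangulated.

From mathcomp Require Import all_boot all_order all_algebra.
Import GRing.Theory.
Local Open Scope ring_scope.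

(* The torsion triangle X -f-> T -g-> Y -> X[1] of an object T does all the
   work: by the long exact Hom sequences of a distinguished triangle, f is a
   weak kernel of g and g a weak cokernel of f.  A morphism killed by R
   therefore factors through f, hence lies in I, and f is a right
   I-approximation since every morphism of I into T is killed by g; the
   statements about R are dual. *)

Section Composition.
Context {k : fieldType} {C : hfcat k}.
Local Notation H := (Mor C).

Lemma comp0l X Y Z (f : H X Y) : comp (0 : H Y Z) f = 0.
Proof.
have := comp_linl f (-1) (0 : H Y Z) 0.
by rewrite scaler0 addr0 scaleN1r addNr.
Qed.

Lemma comp0r X Y Z (g : H Y Z) : comp g (0 : H X Y) = 0.
Proof.
have := comp_linr g (-1) (0 : H X Y) 0.
by rewrite scaler0 addr0 scaleN1r addNr.
Qed.

Lemma compNl X Y Z (f : H X Y) (g : H Y Z) : comp (- g) f = - comp g f.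
Proof. by have := comp_linl f (-1) g 0; rewrite addr0 comp0l addr0 !scaleN1r. Qed.

Lemma compNr X Y Z (f : H X Y) (g : H Y Z) : comp g (- f) = - comp g f.
Proof. by have := comp_linr g (-1) f 0; rewrite addr0 comp0r addr0 !scaleN1r. Qed.

End Composition.

Section DistinguishedTriangles.
Context {k : fieldType} {T : tridata k}.
Local Notation C := (tcat T).
Local Notation H := (Mor C).
Hypothesis triT : triangulated T.

Lemma shM0 X Y : shM (0 : H X Y) = 0.
Proof.
case: triT => _ [shM_lin _ _ _ _] _ _ _.
have := shM_lin X Y (-1) 0 0.
by rewrite scaler0 addr0 scaleN1r addNr.
Qed.

Lemma dist_weak_kernel {X Y Z} {u : H X Y} {v : H Y Z} {w : H Z (shO T X)}
    {W} {f : H W Y} :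
  dist u v w -> comp v f = 0 -> exists h : H W X, f = comp u h.
Proof.
move=> duvw vf0.
case: triT => [[[Z0 Z0_zero] _] [_ shM_id shM_comp shM_bij _] [_ dist_id _]
  rot [TR3 _]].
have dW : dist (idm W) (0 : H W Z0) 0 by exact: dist_id.
(* rotate both triangles and compare them along (f, 0 : Z0 -> Z) *)
have [c [_ cE]] := TR3 _ _ _ _ _ _ _ _ _ _ _ _ f (0 : H Z0 Z)
  (proj1 (rot _ _ _ _ _ _) dW) (proj1 (rot _ _ _ _ _ _) duvw)
  (etrans vf0 (esym (comp0l _ _ _ _))).
rewrite shM_id compNl compNr comp_idr in cE.
have [g _ gK] := shM_bij W X.
exists (g c); apply: (bij_inj (shM_bij W Y)).
by rewrite shM_comp gK; apply: oppr_inj.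
Qed.

Lemma dist_weak_cokernel {X Y Z} {u : H X Y} {v : H Y Z} {w : H Z (shO T X)}
    {W} {g : H Y W} :
  dist u v w -> comp g u = 0 -> exists h : H Z W, g = comp h v.
Proof.
move=> duvw gu0.
case: triT => [[[Z0 Z0_zero] _] [_ shM_id _ _ _] [_ dist_id _] rot [TR3 _]].
have shZ0_zero : is_zero_obj (shO T Z0).
  by rewrite /is_zero_obj -shM_id Z0_zero shM0.
have dW : dist (0 : H Z0 W) (idm W) 0 by apply/rot; exact: dist_id.
have [h [hE _]] := TR3 _ _ _ _ _ _ _ _ _ _ _ _ (0 : H X Z0) g duvw dW
  (etrans (comp0r _ _ _ _) (esym gu0)).
by exists h; rewrite -hE comp_idl.
Qed.

End DistinguishedTriangles.

Section IdealTorsionPair.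
Context {k : fieldType} {T : tridata k}.
Local Notation C := (tcat T).
Local Notation O := (Obj C).
Local Notation H := (Mor C).
Context {I R : forall X Y : O, H X Y -> Prop}.
Hypotheses (triT : triangulated T) (IR : ideal_torsion_pair I R).

Lemma torsion_pair_orth {X Y Z} {i : H X Y} {r : H Y Z} :
  I X Y i -> R Y Z r -> comp r i = 0.
Proof.
case: IR => _ _ orth _ Ii Rr.
by have := orth _ _ _ _ i r (idm Y) Ii Rr; rewrite comp_idl.
Qed.

Lemma torsion_pair_CoGh X Y (f : H X Y) : I X Y f <-> CoGh R f.
Proof.
split=> [If Z r Rr | Rf0]; first exact: torsion_pair_orth.
case: IR => [[_ _ Icomp] _ _ torsion].
have [A [B [a [b [c [Ia Rb dabc]]]]]] := torsion Y.
have [h ->] := dist_weak_kernel triT dabc (Rf0 _ _ Rb).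
by have := Icomp _ _ _ _ h a (idm Y) Ia; rewrite comp_idl.
Qed.

Lemma torsion_pair_Gh X Y (f : H X Y) : R X Y f <-> Gh I f.
Proof.
split=> [Rf W i Ii | If0]; first exact: torsion_pair_orth.
case: IR => [_ [_ _ Rcomp] _ torsion].
have [A [B [a [b [c [Ia Rb dabc]]]]]] := torsion X.
have [h ->] := dist_weak_cokernel triT dabc (If0 _ _ Ia).
by have := Rcomp _ _ _ _ (idm X) b h Rb; rewrite comp_idr.
Qed.

Lemma torsion_pair_contravariantly_finite : contravariantly_finite I.
Proof.
case: IR => _ _ _ torsion Y.
have [A [B [a [b [c [Ia Rb dabc]]]]]] := torsion Y.
exists A, a; split=> // S j Ij.
exact (dist_weak_kernel triT dabc (torsion_pair_orth Ij Rb)).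
Qed.

Lemma torsion_pair_covariantly_finite : covariantly_finite R.
Proof.
case: IR => _ _ _ torsion X.
have [A [B [a [b [c [Ia Rb dabc]]]]]] := torsion X.
exists B, b; split=> // U j Rj.
exact (dist_weak_cokernel triT dabc (torsion_pair_orth Ia Rj)).
Qed.

End IdealTorsionPair.

Theorem proposition2p5 (k : closedFieldType) (T : tridata k)
  (I R : forall X Y : Obj (tcat T), Mor (tcat T) X Y -> Prop) :
  triangulated T -> krull_schmidt (tcat T) ->
  ideal_torsion_pair I R ->
  ((forall X Y (f : Mor (tcat T) X Y), I X Y f <-> CoGh R f) /\
   (forall X Y (f : Mor (tcat T) X Y), R X Y f <-> Gh I f)) /\
  (contravariantly_finite I /\ covariantly_finite R).
Proof.
move=> triT _ IR; split; split.
- exact: (torsion_pair_CoGh triT IR).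
- exact: (torsion_pair_Gh triT IR).
- exact: (torsion_pair_contravariantly_finite triT IR).
- exact: (torsion_pair_covariantly_finite triT IR).
Qed.
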